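(* Let $\Lambda\subseteq\Lambda_f\subset\mathbb{R}^n$ be nested lattices with Voronoi regions $\mathcal{V}$ and $\mathcal{V}_f$ respectively, and suppose the tiling condition $\mathcal{V}=(\Lambda_f\cap\mathcal{V})+\mathcal{V}_f$ holds (Minkowski sum). Then for every $\mathbf{x}\in\mathbb{R}^n$, $$[Q_{\Lambda_f}(\mathbf{x})]\bmod\Lambda=Q_{\Lambda_f}\big([\mathbf{x}]\bmod\Lambda\big).$$
   Context: For a lattice $L\subset\mathbb{R}^n$ with Voronoi region $\mathcal{V}_L$ (the set of points whose nearest lattice point is $\mathbf{0}$, ties broken systematically so that $\mathcal{V}_L$ is a fundamental domain), $Q_L(\mathbf{y})$ is the unique $\mathbf{t}\in L$ with $\mathbf{y}-\mathbf{t}\in\mathcal{V}_L$, and $[\mathbf{y}]\bmod L=\mathbf{y}-Q_L(\mathbf{y})$. *)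

From HB Require Import structures.
From mathcomp Require Import all_boot all_order all_algebra.
From mathcomp Require Import boolp classical_sets reals.
Set Implicit Arguments. Unset Strict Implicit. Unset Printing Implicit Defensive.
Import Order.TTheory GRing.Theory Num.Theory.
Local Open Scope ring_scope.
Local Open Scope classical_set_scope.

Definition sqnorm (R : realType) (n : nat) (v : 'rV[R]_n) : R :=
  \sum_(i < n) v ord0 i ^+ 2.

Definition is_lattice (R : realType) (n : nat) (L : set 'rV[R]_n) : Prop :=
  exists B : 'M[R]_n, B \in unitmx /\
    forall v, L v <-> exists z : 'rV[int]_n, v = map_mx (fun k : int => k%:~R) z *m B.

(* V is a Voronoi region of L (with ties broken so that V is a fundamental
   domain): every point of V has 0 as a nearest lattice point, and every
   y has a unique t in L with y - t in V. *)
Definition is_voronoi (R : realType) (n : nat) (L V : set 'rV[R]_n) : Prop :=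
  (forall v, V v -> forall t, L t -> sqnorm v <= sqnorm (v - t)) /\
  (forall y, exists! t, L t /\ V (y - t)).

Definition QL (R : realType) (n : nat) (L V : set 'rV[R]_n) (y : 'rV[R]_n) : 'rV[R]_n :=
  xget 0 [set t | L t /\ V (y - t)].

Definition modL (R : realType) (n : nat) (L V : set 'rV[R]_n) (y : 'rV[R]_n) : 'rV[R]_n :=
  y - QL L V y.

From HB Require Import structures.
From mathcomp Require Import all_boot all_order all_algebra.
From mathcomp Require Import boolp classical_sets reals.
Import Order.TTheory GRing.Theory Num.Theory.
Local Open Scope ring_scope.
Local Open Scope classical_set_scope.

(* Only the fundamental-domain property of the Voronoi regions matters: every
   point decomposes uniquely as t + v with t in the lattice and v in its
   region, so Q_L (t + v) = t.  Write x = s + r with s = Q_L(x) and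
   r = [x] mod L in V; the tiling condition splits r = a + b with a in
   Lf /\ V and b in Vf.  Then Q_Lf(r) = a and, since s + a lies in Lf,
   Q_Lf(x) = s + a, whose reduction mod L is a because a lies in V. *)

Lemma is_lattice_addr_closed (R : realType) (n : nat) (L : set 'rV[R]_n) a b :
  is_lattice L -> L a -> L b -> L (a + b).
Proof.
move=> [B [_ HB]] /HB [za ->] /HB [zb ->]; apply/HB; exists (za + zb).
rewrite -mulmxDl; congr (_ *m _); apply/matrixP => i j.
by rewrite !mxE rmorphD.
Qed.

Section Quantizer.
Variables (R : realType) (n : nat) (L V : set 'rV[R]_n).
Hypothesis LV : is_voronoi L V.

Lemma QL_spec y : L (QL L V y) /\ V (y - QL L V y).
Proof.
have [t [Ht _]] := LV.2 y.
exact: (@xgetPex _ 0 [set t | L t /\ V (y - t)] (ex_intro _ t Ht)).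
Qed.

Lemma QL_unique y t : L t -> V (y - t) -> QL L V y = t.
Proof.
move=> Lt Vt; have [u [_ u_uniq]] := LV.2 y.
by rewrite -(u_uniq _ (QL_spec y)) -(u_uniq _ (conj Lt Vt)).
Qed.

Lemma QL_addr t v : L t -> V v -> QL L V (t + v) = t.
Proof. by move=> Lt Vv; apply: QL_unique => //; rewrite addrAC subrr add0r. Qed.

Lemma modL_addr t v : L t -> V v -> modL L V (t + v) = v.
Proof. by move=> Lt Vv; rewrite /modL QL_addr // addrAC subrr add0r. Qed.

End Quantizer.

Arguments QL_spec {R n L V}.

Theorem lemma6 (R : realType) (n : nat) (L Lf V Vf : set 'rV[R]_n) :
  is_lattice L -> is_lattice Lf -> L `<=` Lf ->
  is_voronoi L V -> is_voronoi Lf Vf ->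
  (forall y, V y <-> exists a b, (Lf `&` V) a /\ Vf b /\ y = a + b) ->
  forall x : 'rV[R]_n, modL L V (QL Lf Vf x) = QL Lf Vf (modL L V x).
Proof.
move=> _ latLf subL vorL vorLf tiling x.
set s := QL L V x; have [Ls Vr] := QL_spec vorL x.
have [a [b [[Lfa Va] [Vfb r_ab]]]] := (tiling _).1 Vr.
have x_sab : x = (s + a) + b by rewrite -addrA -r_ab addrC subrK.
have -> : QL Lf Vf x = s + a.
  by rewrite x_sab QL_addr //; apply: is_lattice_addr_closed (subL _ Ls) Lfa.
have -> : modL L V x = a + b by rewrite /modL -/s r_ab.
by rewrite modL_addr // QL_addr.
Qed.
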